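(* Let $d\ge1$, $m\in\mathbb{N}$ ($m\ge1$), and let $A_0,A_1\in\mathbb{R}^{d\times d}$ be constant matrices with $A_0A_1\ne A_1A_0$. Let $Z:\mathbb{Z}\to\mathbb{R}^{d\times d}$ be the discrete function defined in the context. Then $Z$ is the unique solution of the initial value problem \[ \Delta X(u)=A_0X(u-m)+X(u-m)A_1,\ \ u\in\mathbb{Z}_0^{\infty},\qquad X(u)=I,\ \ u\in\mathbb{Z}_{-m}^{0}. \] In particular, \[ \Delta Z(u)=A_0Z(u-m)+Z(u-m)A_1\qquad\text{for all }u\in\mathbb{Z}_{-m}^{\infty}. \]
   Context: $\Theta$ and $I$ denote the $d\times d$ zero and identity matrices; $\mathbb{Z}_a^b=\{a,a+1,\dots,b\}$ (with $\mathbb{Z}_a^\infty=\{a,a+1,\dots\}$ and $\mathbb{Z}_{-\infty}^b=\{\dots,b-1,b\}$); $\Delta X(u)=X(u+1)-X(u)$. For integers $a$ and $r\ge0$, $\binom{a}{r}=a(a-1)\cdots(a-r+1)/r!$. Define matrices $Q_{r+1}(rm)$, $r=0,1,2,\dots$, by $Q_1(0)=I$ and $Q_{r+1}(rm)=A_0Q_r((r-1)m)+Q_r((r-1)m)A_1$ for $r\ge1$. Define $Z(u)=\Theta$ for $u\in\mathbb{Z}_{-\infty}^{-m-1}$, $Z(u)=I$ for $u\in\mathbb{Z}_{-m}^{0}$, and for each integer $n\ge1$ and $u\in\mathbb{Z}_{(n-1)(m+1)+1}^{n(m+1)}$, \[ Z(u)=\sum_{r=0}^{n}\binom{u-(r-1)m}{r}Q_{r+1}(rm).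 \] *)

From HB Require Import structures.
From mathcomp Require Import all_boot all_order all_algebra.
From mathcomp Require Import reals.
Set Implicit Arguments. Unset Strict Implicit. Unset Printing Implicit Defensive.
Import Order.TTheory GRing.Theory Num.Theory.
Local Open Scope ring_scope.

Definition binomZ (R : realType) (a : int) (r : nat) : R :=
  (\prod_(i < r) ((a - i%:Z)%:~R : R)) / (r`!)%:R.

(* Qm A0 A1 r = Q_{r+1}(r m):  Q_1(0) = I, Q_{r+1}(rm) = A0 Q_r((r-1)m) + Q_r((r-1)m) A1 *)
Fixpoint Qm (R : realType) (d : nat) (A0 A1 : 'M[R]_d) (r : nat) : 'M[R]_d :=
  match r with
  | 0 => 1%:M
  | r'.+1 => A0 *m Qm A0 A1 r' + Qm A0 A1 r' *m A1
  end.

(* The function Z of the paper.  For u >= 1 the block index n with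
   (n-1)(m+1)+1 <= u <= n(m+1) is n = ((u-1) %/ (m+1)) + 1. *)
Definition Zfun (R : realType) (d m : nat) (A0 A1 : 'M[R]_d) (u : int) : 'M[R]_d :=
  if u < - (m%:Z) then 0
  else if u <= 0 then 1%:M
  else let n := ((`|u|%N).-1 %/ m.+1).+1 in
       \sum_(r < n.+1) binomZ R (u - (r%:Z - 1) * m%:Z) r *: Qm A0 A1 r.

Definition delay_eq (R : realType) (d m : nat) (A0 A1 : 'M[R]_d)
  (X : int -> 'M[R]_d) (u : int) : Prop :=
  X (u + 1) - X u = A0 *m X (u - m%:Z) + X (u - m%:Z) *m A1.

Definition solves_ivp (R : realType) (d m : nat) (A0 A1 : 'M[R]_d)
  (X : int -> 'M[R]_d) : Prop :=
  (forall u : int, 0 <= u -> delay_eq m A0 A1 X u) /\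
  (forall u : int, - (m%:Z) <= u <= 0 -> X u = 1%:M).

(* Z is assembled from the truncated sums
     Zpart n u = \sum_(r <= n) binom(u - (r-1)m, r) Q_{r+1}(rm),
   and Pascal's rule binom(a+1, r+1) - binom(a, r+1) = binom(a, r) together
   with Q_{r+2} = A0 Q_{r+1} + Q_{r+1} A1 gives
     Zpart (n+1) (u+1) - Zpart (n+1) u = A0 Zpart n (u-m) + Zpart n (u-m) A1.
   On the block (n-1)(m+1) < u <= n(m+1) the function Z is Zpart n; at its
   right end u = n(m+1) it is also Zpart (n+1), the extra coefficient
   binom(n, n+1) being 0.  So for every u >= 0 the three values Z(u+1), Z(u),
   Z(u-m) are Zpart (q+1), Zpart (q+1), Zpart q for one q, and Z solves the
   equation.  Uniqueness holds because the equation determines X(u+1) from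
   X(u) and X(u-m). *)
From Pilot Require Import Defs.
From HB Require Import structures.
From mathcomp Require Import all_boot all_order all_algebra.
From mathcomp Require Import reals.
From mathcomp Require Import zify ring.
Import Order.TTheory GRing.Theory Num.Theory.
Local Open Scope ring_scope.

Section BinomZ.
Variable R : realType.

Lemma binomZ0 (a : int) : binomZ R a 0 = 1.
Proof. by rewrite /binomZ big_ord0 fact0 divr1. Qed.

Lemma binomZS (a : int) (r : nat) :
  binomZ R (a + 1) r.+1 = binomZ R a r.+1 + binomZ R a r.
Proof.
have prodS : \prod_(i < r.+1) ((a + 1 - i%:Z)%:~R : R)
           = (a + 1)%:~R * \prod_(i < r) ((a - i%:Z)%:~R).
  rewrite big_ord_recl /= subr0; congr (_ * _); apply: eq_bigr => i _.
  congr (_%:~R); rewrite /bump /=; lia.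
rewrite /binomZ prodS big_ord_recr /= factS natrM intrD intrB /=.
have fact_neq0 : (r`!)%:R != 0 :> R by rewrite pnatr_eq0 -lt0n fact_gt0.
have succ_neq0 : 1 + r%:R != 0 :> R by rewrite addrC natr1 pnatr_eq0.
by field; rewrite fact_neq0 succ_neq0.
Qed.

Lemma binomZ_small (k r : nat) : (k < r)%N -> binomZ R k%:Z r = 0.
Proof.
by move=> lt_kr; rewrite /binomZ (bigD1 (Ordinal lt_kr)) //= subrr !mul0r.
Qed.

End BinomZ.

Section DelayedMatrixExponential.
Variables (R : realType) (d m : nat) (A0 A1 : 'M[R]_d).

Local Notation Z := (Zfun m A0 A1).
Local Notation delay_eq := (delay_eq m A0 A1).

Definition Zpart (n : nat) (u : int) : 'M[R]_d :=
  \sum_(r < n.+1) binomZ R (u - (r%:Z - 1) * m%:Z) r *: Qm A0 A1 r.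

Lemma Zpart0 u : Zpart 0 u = 1%:M.
Proof. by rewrite /Zpart big_ord1 binomZ0 scale1r. Qed.

Lemma ZpartS n u :
  Zpart n.+1 u = Zpart n u + binomZ R (u - n%:Z * m%:Z) n.+1 *: Qm A0 A1 n.+1.
Proof.
rewrite /Zpart big_ord_recr /=; congr (_ + binomZ R _ _ *: _).
rewrite -addn1 PoszD; ring.
Qed.

Lemma Zpart_delay n u :
  Zpart n.+1 (u + 1) - Zpart n.+1 u
  = A0 *m Zpart n (u - m%:Z) + Zpart n (u - m%:Z) *m A1.
Proof.
rewrite /Zpart -sumrB big_ord_recl /= !binomZ0 subrr add0r.
rewrite mulmx_sumr mulmx_suml -big_split /=.
apply: eq_bigr => i _; rewrite /bump /= add1n.
rewrite -scalerBl -scalemxAr -scalemxAl -scalerDr /=; congr (_ *: _).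
have -> : i.+1%:Z - 1 = i%:Z by lia.
have -> : u + 1 - i%:Z * m%:Z = (u - i%:Z * m%:Z) + 1 by lia.
by rewrite binomZS addrAC subrr add0r; congr binomZ; lia.
Qed.

Lemma Zfun_neg u : u < - m%:Z -> Z u = 0.
Proof. by move=> lt_u; rewrite /Zfun lt_u. Qed.

Lemma Zfun_init u : - m%:Z <= u <= 0 -> Z u = 1%:M.
Proof. by move=> /andP[ge_u le_u0]; rewrite /Zfun ifF ?le_u0 //; lia. Qed.

Lemma Zfun_block (n : nat) (u : int) :
  (n%:Z - 1) * m.+1%:Z < u <= n%:Z * m.+1%:Z -> Z u = Zpart n u.
Proof.
case: n => [|n] u_block; first by rewrite Zpart0 Zfun_init //; lia.
case: u u_block => [[|j]|j] u_block; try lia.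
rewrite /Zfun ifF ?ifF /=; try lia.
suff -> : (j %/ m.+1)%N = n by [].
apply/eqP; rewrite eqn_leq leq_divRL // -ltnS ltn_divLR //; lia.
Qed.

Lemma Zfun_block_end (n : nat) : Z (n%:Z * m.+1%:Z) = Zpart n.+1 (n%:Z * m.+1%:Z).
Proof.
rewrite ZpartS -Zfun_block; last by lia.
have -> : n%:Z * m.+1%:Z - n%:Z * m%:Z = n%:Z by lia.
by rewrite binomZ_small // scale0r addr0.
Qed.

Lemma Zfun_delay u : - m%:Z <= u -> delay_eq Z u.
Proof.
move=> ge_u; rewrite /Defs.delay_eq.
have [lt_u0|ge_u0] := ltrP u 0.
  by rewrite (Zfun_neg (u - m%:Z)) ?mulmx0 ?mul0mx ?addr0 ?Zfun_init ?subrr //; lia.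
set q := (`|u| %/ m.+1)%N.
have u_between : q%:Z * m.+1%:Z <= u <= q%:Z * m.+1%:Z + m%:Z.
  have := divn_eq `|u| m.+1; have := ltn_pmod `|u| (ltn0Sn m); rewrite -/q; lia.
rewrite (@Zfun_block q.+1 (u + 1)); last by lia.
rewrite (@Zfun_block q (u - m%:Z)); last by lia.
have [->|gt_u] := eqVneq u (q%:Z * m.+1%:Z).
  by rewrite Zfun_block_end Zpart_delay.
by rewrite (@Zfun_block q.+1 u) ?Zpart_delay //; lia.
Qed.

Lemma delay_eq_unique (X Y : int -> 'M[R]_d) :
  (forall u, 0 <= u -> delay_eq X u) -> (forall u, 0 <= u -> delay_eq Y u) ->
  (forall u, - m%:Z <= u <= 0 -> X u = Y u) ->
  forall u, - m%:Z <= u -> X u = Y u.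
Proof.
move=> eqX eqY eq_init.
suff eq_upto n u : - m%:Z <= u <= n%:Z -> X u = Y u.
  by move=> u ge_u; apply: (eq_upto `|u|%N); lia.
elim: n u => [|n IHn] u u_range; first by apply: eq_init; lia.
have [le_un|gt_un] := lerP u n%:Z; first by apply: IHn; lia.
have -> : u = n%:Z + 1 by lia.
have step V : delay_eq V n%:Z ->
    V (n%:Z + 1) = V n%:Z + (A0 *m V (n%:Z - m%:Z) + V (n%:Z - m%:Z) *m A1).
  by rewrite /Defs.delay_eq => <-; rewrite addrCA subrr addr0.
rewrite (step X (eqX _ _)) // (step Y (eqY _ _)) // !IHn //; lia.
Qed.

End DelayedMatrixExponential.

Theorem theorem3 (R : realType) (d m : nat) (A0 A1 : 'M[R]_d)
  (hd : (0 < d)%N) (hm : (0 < m)%N) (hA : A0 *m A1 != A1 *m A0) :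
  solves_ivp m A0 A1 (Zfun m A0 A1) /\
  (forall X : int -> 'M[R]_d, solves_ivp m A0 A1 X ->
     forall u : int, - (m%:Z) <= u -> X u = Zfun m A0 A1 u) /\
  (forall u : int, - (m%:Z) <= u -> delay_eq m A0 A1 (Zfun m A0 A1) u).
Proof.
have Z_solves : solves_ivp m A0 A1 (Zfun m A0 A1).
  by split; [move=> u ge_u0; apply: Zfun_delay; lia | exact: Zfun_init].
split; [exact: Z_solves | split; last exact: Zfun_delay].
move=> X [eqX X_init]; apply: (@delay_eq_unique R d m A0 A1) => //; first exact: Z_solves.1.
by move=> u u_init; rewrite X_init // Zfun_init.
Qed.
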